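(* Let $\alpha\neq 0$ be a real number and let $S$ be an $\alpha$-singular maximal surface of $\mathbb L^3$ which is invariant under the one-parameter group of translations $\{p\mapsto p+t\vec v: t\in\mathbb R\}$ generated by a unit vector $\vec v$, so that $S$ is parametrized as $X(s,t)=\gamma(s)+t\vec v$ with generatrix $\gamma$ a planar spacelike curve with nonzero curvature, contained in a plane orthogonal to $\vec v$ (the unit normal of $S$ being taken as the normal $\mathbf n=\gamma'\times\vec v$ of $\gamma$). Then $\vec v$ is horizontal (i.e. parallel to the $xy$-plane), $\gamma$ is contained in a (vertical) plane orthogonal to $\vec v$, and $\gamma$, viewed as a planar curve of this plane identified with $\mathbb L^2$ (with the $z$-axis of $\mathbb L^3$ corresponding to the $y$-axis of $\mathbb L^2$), satisfies $$\kappa=-\alpha\frac{\langle \mathbf n,(0,1)\rangle}{y}.$$ Conversely, if $\gamma$ is a curve in $\mathbb L^2$ satisfying this equation and it is embedded in the $xz$-plane of $\mathbb L^3$ (identifying $\mathbb L^2$ with the $xz$-plane, its $y$-axis with the $z$-axis), then the surface $X(s,t)=\gamma(s)+t(0,1,0)$ is an $\alpha$-singular maximal surface.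
   Context: $\mathbb L^3$ is $\mathbb R^3$ with the Lorentzian metric $\langle\cdot,\cdot\rangle=dx^2+dy^2-dz^2$; $\mathbb L^2$ is $\mathbb R^2$ with metric $dx^2-dy^2$. A surface is spacelike if its induced metric is Riemannian; its unit normal $N$ is then timelike. The mean curvature $H$ is the trace of the second fundamental form (sum of principal curvatures) with respect to $N$. For $\alpha\neq0$, an $\alpha$-singular maximal surface is a spacelike surface $S$ in the halfspace $z>0$ satisfying $H(p)=\alpha\frac{\langle N(p),\vec a\rangle}{\langle p,\vec a\rangle}=-\alpha\frac{\langle N(p),\vec a\rangle}{z}$ for all $p\in S$, where $\vec a=(0,0,1)$ and $N$ is a unit normal field. For a spacelike curve $\gamma$ in the halfplane $y>0$ of $\mathbb L^2$ parametrized by arc length, the curvature $\kappa\neq0$ is defined by $\gamma''=\kappa\,\mathbf n$, where $\mathbf n$ is a unit (timelike) normal vector. *)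

From Stdlib Require Import Reals.
From Coquelicot Require Import Coquelicot.
Open Scope R_scope.

Record vec3 := V3 { vx : R; vy : R; vz : R }.

Definition vadd (u w : vec3) : vec3 := V3 (vx u + vx w) (vy u + vy w) (vz u + vz w).
Definition vscale (k : R) (u : vec3) : vec3 := V3 (k * vx u) (k * vy u) (k * vz u).

Definition lor (u w : vec3) : R := vx u * vx w + vy u * vy w - vz u * vz w.

(** Lorentzian cross product: the unique vector with lor (lcross u w) z = det(u,w,z). *)
Definition lcross (u w : vec3) : vec3 :=
  V3 (vy u * vz w - vz u * vy w)
     (vz u * vx w - vx u * vz w)
     (- (vx u * vy w - vy u * vx w)).

Definition e3 : vec3 := V3 0 0 1.

Definition dcurve (c : R -> vec3) (s : R) : vec3 :=
  V3 (Derive (fun u => vx (c u)) s) (Derive (fun u => vy (c u)) s)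
     (Derive (fun u => vz (c u)) s).

Definition C2_on (f : R -> R) (a b : R) : Prop :=
  forall s, a < s < b -> ex_derive f s /\ ex_derive (Derive f) s.

Definition C2_curve3 (c : R -> vec3) (a b : R) : Prop :=
  C2_on (fun u => vx (c u)) a b /\ C2_on (fun u => vy (c u)) a b /\
  C2_on (fun u => vz (c u)) a b.

Definition Xs (X : R -> R -> vec3) (s t : R) : vec3 := dcurve (fun u => X u t) s.
Definition Xt (X : R -> R -> vec3) (s t : R) : vec3 := dcurve (fun u => X s u) t.
Definition Xss X s t := Xs (Xs X) s t.
Definition Xst X s t := Xs (Xt X) s t.
Definition Xtt X s t := Xt (Xt X) s t.

Definition fE X s t := lor (Xs X s t) (Xs X s t).
Definition fF X s t := lor (Xs X s t) (Xt X s t).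
Definition fG X s t := lor (Xt X s t) (Xt X s t).

Definition spacelike_at (X : R -> R -> vec3) (s t : R) : Prop :=
  0 < fE X s t /\ 0 < fE X s t * fG X s t - fF X s t ^ 2.

Definition unit_normal_at (X : R -> R -> vec3) (N : R -> R -> vec3) (s t : R) : Prop :=
  lor (N s t) (N s t) = -1 /\ lor (N s t) (Xs X s t) = 0 /\ lor (N s t) (Xt X s t) = 0.

(** Mean curvature with respect to N: trace of the second fundamental form
    sigma, measured along N, i.e. H = <trace sigma, N> / <N,N>
    (so that the mean curvature vector trace sigma equals H N; this is the
    same convention as gamma'' = kappa n for curves). *)
Definition mean_curv (X : R -> R -> vec3) (N : R -> R -> vec3) (s t : R) : R :=
  let E := fE X s t in let F := fF X s t in let G := fG X s t in
  let e := lor (Xss X s t) (N s t) in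
  let f := lor (Xst X s t) (N s t) in
  let g := lor (Xtt X s t) (N s t) in
  ((e * G - 2 * f * F + g * E) / (E * G - F ^ 2)) / lor (N s t) (N s t).

Definition alpha_singular_maximal (alpha : R) (D : R -> R -> Prop)
  (X : R -> R -> vec3) (N : R -> R -> vec3) : Prop :=
  forall s t, D s t ->
    spacelike_at X s t /\ unit_normal_at X N s t /\ 0 < vz (X s t) /\
    mean_curv X N s t = - alpha * lor (N s t) e3 / vz (X s t).

Definition lor2 (p q : R * R) : R := fst p * fst q - snd p * snd q.

Definition dcurve2 (c : R -> R * R) (s : R) : R * R :=
  (Derive (fun u => fst (c u)) s, Derive (fun u => snd (c u)) s).

Definition C2_curve2 (c : R -> R * R) (a b : R) : Prop :=
  C2_on (fun u => fst (c u)) a b /\ C2_on (fun u => snd (c u)) a b.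

From Stdlib Require Import Reals Lra.
From Coquelicot Require Import Coquelicot.
Open Scope R_scope.

(** A translation surface [X s t = gamma s + t v] with [gamma'] and [v]
    orthonormal has the identity as metric and [X_st = X_tt = 0], so its
    mean curvature along a unit normal [N] is [- <gamma'', N>], which is
    [kappa] when [gamma'' = kappa N].  Staying in [z > 0] for every [t]
    forces [v] to be horizontal; then the coordinates along [v^perp] and
    [e3] split [L^3] isometrically as [R v (+) L^2] and carry [gamma], [N]
    and the singular maximal equation to the plane.  Conversely, a unit
    timelike normal of a unit plane curve is [+-] its rotated tangent, and
    the same computation runs backwards. *)

Lemma Derive_plus_const (f : R -> R) (c x : R) :
  Derive (fun u => f u + c) x = Derive f x.
Proof.
  unfold Derive; f_equal; apply Lim_ext; intros h; unfold Rdiv; f_equal; ring.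
Qed.

Lemma Derive_affine (c k x : R) : Derive (fun u => c + u * k) x = k.
Proof. apply is_derive_unique; auto_derive; [exact I | apply Rmult_1_l]. Qed.

Lemma Derive_lincomb3 (f g h : R -> R) (p q r x : R) :
  ex_derive f x -> ex_derive g x -> ex_derive h x ->
  Derive (fun u => f u * p + g u * q - h u * r) x
  = Derive f x * p + Derive g x * q - Derive h x * r.
Proof. intros hf hg hh; apply is_derive_unique; auto_derive; [tauto | rewrite !Rmult_1_l; reflexivity]. Qed.

Lemma locally_open_interval (a b s : R) :
  a < s < b -> locally s (fun u => a < u < b).
Proof. intros hs; apply (open_and _ _ (open_gt a) (open_lt b)); exact hs. Qed.

Lemma lor_scale (k : R) (u w : vec3) : lor (vscale k u) w = k * lor u w.
Proof. destruct u, w; unfold lor; simpl; ring. Qed.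

Lemma lor_e3 (u : vec3) : lor u e3 = - vz u.
Proof. destruct u; unfold lor; simpl; ring. Qed.

Lemma lor_lcrossl (u v : vec3) : lor (lcross u v) u = 0.
Proof. destruct u, v; unfold lor; simpl; ring. Qed.

Lemma lor_lcrossr (u v : vec3) : lor (lcross u v) v = 0.
Proof. destruct u, v; unfold lor; simpl; ring. Qed.

Lemma lor_lcross_lagrange (u v : vec3) :
  lor (lcross u v) (lcross u v) = lor u v ^ 2 - lor u u * lor v v.
Proof. destruct u, v; unfold lor; simpl; ring. Qed.

Lemma lcross_unit_normal (u v : vec3) :
  lor u u = 1 -> lor v v = 1 -> lor u v = 0 ->
  lor (lcross u v) (lcross u v) = -1.
Proof. intros hu hv huv; rewrite lor_lcross_lagrange, hu, hv, huv; ring. Qed.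

Lemma lcross_timelike_orthogonal (u v : vec3) :
  lor u u = 1 -> lor v v = 1 -> lor (lcross u v) (lcross u v) = -1 ->
  lor u v = 0.
Proof.
  rewrite lor_lcross_lagrange; intros hu hv hN; rewrite hu, hv in hN.
  apply Rsqr_0_uniq; unfold Rsqr; lra.
Qed.

Lemma lor2_e2 (p : R * R) : lor2 p (0, 1) = - snd p.
Proof. destruct p; unfold lor2; simpl; ring. Qed.

(** For unit [T] this says [n = +- (snd T, fst T)]; the identity itself
    does not need [T] to be unit. *)
Lemma lor2_normal_rotated (T n : R * R) :
  lor2 n n = -1 -> lor2 n T = 0 -> lor2 n (snd T, fst T) * snd n = - fst T.
Proof.
  destruct T as [p q], n as [n1 n2]; unfold lor2; simpl; intros hn hT.
  transitivity (- n1 * (n1 * p - n2 * q) + p * (n1 * n1 - n2 * n2 + 1) - p);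
    [ring | rewrite hT, hn; ring].
Qed.

Definition hperp (v : vec3) : vec3 := V3 (- vy v) (vx v) 0.

Definition plane_coords (v u : vec3) : R * R := (lor u (hperp v), vz u).

Section HorizontalUnit.

Variable v : vec3.
Hypothesis v_horizontal : vz v = 0.
Hypothesis v_unit : lor v v = 1.

Let v_sq : vx v * vx v + vy v * vy v = 1.
Proof. unfold lor in v_unit; rewrite v_horizontal in v_unit; lra. Qed.

Lemma vec3_decomp (u : vec3) :
  u = vadd (vscale (lor u v) v)
        (vadd (vscale (lor u (hperp v)) (hperp v)) (vscale (vz u) e3)).
Proof.
  destruct u as [u1 u2 u3], v as [v1 v2 v3]; simpl in *; subst v3.
  unfold lor, vadd, vscale, e3, hperp; simpl; f_equal.
  - transitivity (u1 * (v1 * v1 + v2 * v2)); [rewrite v_sq | ]; ring.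
  - transitivity (u2 * (v1 * v1 + v2 * v2)); [rewrite v_sq | ]; ring.
  - ring.
Qed.

Lemma lor2_plane_coords (u u' : vec3) :
  lor2 (plane_coords v u) (plane_coords v u') = lor u u' - lor u v * lor u' v.
Proof.
  destruct u as [u1 u2 u3], u' as [w1 w2 w3], v as [v1 v2 v3]; simpl in *; subst v3.
  unfold lor2, plane_coords, lor, hperp; simpl.
  transitivity ((u1 * w1 + u2 * w2) * (v1 * v1 + v2 * v2) - u3 * w3
                - (u1 * v1 + u2 * v2) * (w1 * v1 + w2 * v2)); [ring | rewrite v_sq; ring].
Qed.

End HorizontalUnit.

Lemma plane_coords_scale (v u : vec3) (k : R) :
  plane_coords v (vscale k u) = (k * fst (plane_coords v u), k * snd (plane_coords v u)).
Proof. unfold plane_coords; rewrite lor_scale; reflexivity. Qed.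

Definition derivable3 (c : R -> vec3) (s : R) : Prop :=
  ex_derive (fun u => vx (c u)) s /\ ex_derive (fun u => vy (c u)) s /\
  ex_derive (fun u => vz (c u)) s.

Lemma C2_curve3_derivable (c : R -> vec3) (a b s : R) :
  C2_curve3 c a b -> a < s < b -> derivable3 c s /\ derivable3 (dcurve c) s.
Proof.
  intros [hx [hy hz]] hs.
  destruct (hx s hs), (hy s hs), (hz s hs); split; repeat split; assumption.
Qed.

Lemma dcurve_ext (c c' : R -> vec3) (s : R) :
  (forall u, c u = c' u) -> dcurve c s = dcurve c' s.
Proof.
  intros h; unfold dcurve.
  rewrite (Derive_ext (fun u => vx (c u)) (fun u => vx (c' u))),
          (Derive_ext (fun u => vy (c u)) (fun u => vy (c' u))),
          (Derive_ext (fun u => vz (c u)) (fun u => vz (c' u)));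
    trivial; intros u; rewrite h; reflexivity.
Qed.

Lemma dcurve2_ext_loc (c c' : R -> R * R) (s : R) :
  locally s (fun u => c u = c' u) -> dcurve2 c s = dcurve2 c' s.
Proof.
  intros h; unfold dcurve2; f_equal; apply Derive_ext_loc;
    revert h; apply filter_imp; intros u ->; reflexivity.
Qed.

Lemma dcurve2_plane_coords (v : vec3) (c : R -> vec3) (s : R) :
  derivable3 c s ->
  dcurve2 (fun u => plane_coords v (c u)) s = plane_coords v (dcurve c s).
Proof.
  intros [hx [hy hz]]; unfold dcurve2, plane_coords, lor, dcurve; simpl; f_equal.
  apply (Derive_lincomb3 (fun u => vx (c u)) (fun u => vy (c u)) (fun u => vz (c u)));
    assumption.
Qed.

Lemma dcurve2_plane_coords2 (v : vec3) (c : R -> vec3) (a b s : R) :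
  C2_curve3 c a b -> a < s < b ->
  dcurve2 (dcurve2 (fun u => plane_coords v (c u))) s
  = plane_coords v (dcurve (dcurve c) s).
Proof.
  intros hc hs.
  rewrite (dcurve2_ext_loc _ (fun u => plane_coords v (dcurve c u))).
  - apply dcurve2_plane_coords, (C2_curve3_derivable c a b s hc hs).
  - generalize (locally_open_interval a b s hs); apply filter_imp; intros u hu.
    apply dcurve2_plane_coords, (C2_curve3_derivable c a b u hc hu).
Qed.

Definition xz_embed (p : R * R) : vec3 := V3 (fst p) 0 (snd p).

Lemma lor_xz_embed (p q : R * R) : lor (xz_embed p) (xz_embed q) = lor2 p q.
Proof. unfold lor, lor2; simpl; ring. Qed.

Lemma lcross_xz_embed_e2 (p : R * R) :
  lcross (xz_embed p) (V3 0 1 0) = xz_embed (- snd p, - fst p).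
Proof. unfold lcross, xz_embed; simpl; f_equal; ring. Qed.

Lemma dcurve_xz_embed (c : R -> R * R) (s : R) :
  dcurve (fun u => xz_embed (c u)) s = xz_embed (dcurve2 c s).
Proof. unfold dcurve, dcurve2; simpl; rewrite Derive_const; reflexivity. Qed.

Definition cylinder (gamma : R -> vec3) (v : vec3) (s t : R) : vec3 :=
  vadd (gamma s) (vscale t v).

Lemma cylinder_origin (gamma : R -> vec3) (v : vec3) (s : R) :
  cylinder gamma v s 0 = gamma s.
Proof. unfold cylinder, vadd, vscale; destruct (gamma s); simpl; f_equal; ring. Qed.

Lemma Xs_cylinder (gamma : R -> vec3) (v : vec3) (s t : R) :
  Xs (cylinder gamma v) s t = dcurve gamma s.
Proof. unfold Xs, cylinder, dcurve; simpl; rewrite !Derive_plus_const; reflexivity. Qed.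

Lemma Xt_cylinder (gamma : R -> vec3) (v : vec3) (s t : R) :
  Xt (cylinder gamma v) s t = v.
Proof. unfold Xt, cylinder, dcurve; simpl; rewrite !Derive_affine; destruct v; reflexivity. Qed.

Lemma Xss_cylinder (gamma : R -> vec3) (v : vec3) (s t : R) :
  Xss (cylinder gamma v) s t = dcurve (dcurve gamma) s.
Proof. apply dcurve_ext; intros u; apply Xs_cylinder. Qed.

Lemma Xst_cylinder (gamma : R -> vec3) (v : vec3) (s t : R) :
  Xst (cylinder gamma v) s t = V3 0 0 0.
Proof.
  unfold Xst, Xs at 1; rewrite (dcurve_ext _ (fun _ => v)) by (intros u; apply Xt_cylinder).
  unfold dcurve; rewrite !Derive_const; reflexivity.
Qed.

Lemma Xtt_cylinder (gamma : R -> vec3) (v : vec3) (s t : R) :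
  Xtt (cylinder gamma v) s t = V3 0 0 0.
Proof.
  unfold Xtt, Xt at 1; rewrite (dcurve_ext _ (fun _ => v)) by (intros u; apply Xt_cylinder).
  unfold dcurve; rewrite !Derive_const; reflexivity.
Qed.

Section OrthonormalCylinder.

Variables (gamma : R -> vec3) (v : vec3) (s t : R).
Hypothesis v_unit : lor v v = 1.
Hypothesis gamma_unit : lor (dcurve gamma s) (dcurve gamma s) = 1.
Hypothesis gamma_v_orth : lor (dcurve gamma s) v = 0.

Lemma cylinder_spacelike : spacelike_at (cylinder gamma v) s t.
Proof.
  unfold spacelike_at, fE, fF, fG; rewrite Xs_cylinder, Xt_cylinder.
  rewrite gamma_unit, gamma_v_orth, v_unit; lra.
Qed.

Lemma cylinder_lcross_unit_normal :
  unit_normal_at (cylinder gamma v) (fun s _ => lcross (dcurve gamma s) v) s t.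
Proof.
  unfold unit_normal_at; rewrite Xs_cylinder, Xt_cylinder.
  split; [apply lcross_unit_normal; assumption |].
  split; [apply lor_lcrossl | apply lor_lcrossr].
Qed.

Lemma mean_curv_cylinder (N : R -> R -> vec3) :
  lor (N s t) (N s t) = -1 ->
  mean_curv (cylinder gamma v) N s t = - lor (dcurve (dcurve gamma) s) (N s t).
Proof.
  intros hN; unfold mean_curv, fE, fF, fG.
  rewrite Xs_cylinder, Xt_cylinder, Xss_cylinder, Xst_cylinder, Xtt_cylinder, hN.
  rewrite gamma_unit, gamma_v_orth, v_unit.
  unfold lor at 2 3; simpl; field.
Qed.

End OrthonormalCylinder.

Lemma cylinder_upper_halfspace_horizontal (gamma : R -> vec3) (v : vec3) (s : R) :
  (forall t, 0 < vz (cylinder gamma v s t)) -> vz v = 0.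
Proof.
  intros hpos; destruct (Req_dec (vz v) 0) as [h | h]; [exact h | exfalso].
  specialize (hpos (- (vz (gamma s) + 1) / vz v)); unfold cylinder in hpos; simpl in hpos.
  replace (vz (gamma s) + - (vz (gamma s) + 1) / vz v * vz v) with (-1) in hpos
    by (field; exact h).
  lra.
Qed.

Lemma singular_maximal_cylinder_generatrix (alpha a b : R) (gamma : R -> vec3)
    (v : vec3) (kappa : R -> R) (s : R) :
  lor v v = 1 -> vz v = 0 -> C2_curve3 gamma a b -> a < s < b ->
  lor (dcurve gamma s) (dcurve gamma s) = 1 ->
  dcurve (dcurve gamma) s = vscale (kappa s) (lcross (dcurve gamma s) v) ->
  alpha_singular_maximal alpha (fun s _ => a < s < b) (cylinder gamma v)
    (fun s _ => lcross (dcurve gamma s) v) ->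
  let N := lcross (dcurve gamma s) v in
  let beta := fun u => plane_coords v (gamma u) in
  0 < snd (beta s) /\
  lor2 (dcurve2 beta s) (dcurve2 beta s) = 1 /\
  lor2 (plane_coords v N) (plane_coords v N) = -1 /\
  lor2 (plane_coords v N) (dcurve2 beta s) = 0 /\
  dcurve2 (dcurve2 beta) s
    = (kappa s * fst (plane_coords v N), kappa s * snd (plane_coords v N)) /\
  kappa s = - alpha * lor2 (plane_coords v N) (0, 1) / snd (beta s).
Proof.
  intros hv hvz hC2 hs hunit hacc hsm N beta.
  destruct (hsm s 0 hs) as [_ [[hNN _] [hpos hH]]].
  rewrite cylinder_origin in hpos, hH.
  assert (horth : lor (dcurve gamma s) v = 0)
    by (apply lcross_timelike_orthogonal; assumption).
  unfold N, beta; rewrite dcurve2_plane_coords2 with (a := a) (b := b) by assumption.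
  rewrite dcurve2_plane_coords by apply (C2_curve3_derivable gamma a b s hC2 hs).
  rewrite !lor2_plane_coords, lor_lcrossl, lor_lcrossr, horth, hunit, hNN by assumption.
  rewrite mean_curv_cylinder, hacc, lor_scale, hNN in hH by assumption.
  rewrite hacc, plane_coords_scale, lor2_e2.
  rewrite lor_e3 in hH; cbn [plane_coords snd].
  repeat split; [exact hpos | ring | ring | ring | lra].
Qed.

Lemma generatrix_singular_maximal_cylinder (alpha a b : R) (beta n : R -> R * R)
    (kappa : R -> R) :
  (forall s, a < s < b ->
     0 < snd (beta s) /\
     lor2 (dcurve2 beta s) (dcurve2 beta s) = 1 /\
     lor2 (n s) (n s) = -1 /\ lor2 (n s) (dcurve2 beta s) = 0 /\
     dcurve2 (dcurve2 beta) s = (kappa s * fst (n s), kappa s * snd (n s)) /\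
     kappa s = - alpha * lor2 (n s) (0, 1) / snd (beta s)) ->
  let gamma := fun s => xz_embed (beta s) in
  alpha_singular_maximal alpha (fun s _ => a < s < b) (cylinder gamma (V3 0 1 0))
    (fun s _ => lcross (dcurve gamma s) (V3 0 1 0)).
Proof.
  intros hyp gamma s t hs.
  destruct (hyp s hs) as [hpos [hunit [hnn [hno [hacc hk]]]]].
  assert (hd1 : dcurve gamma s = xz_embed (dcurve2 beta s)) by apply dcurve_xz_embed.
  assert (hd2 : dcurve (dcurve gamma) s = xz_embed (kappa s * fst (n s), kappa s * snd (n s))).
  { rewrite <- hacc, <- dcurve_xz_embed; apply dcurve_ext; intros u; apply dcurve_xz_embed. }
  assert (hv : lor (V3 0 1 0) (V3 0 1 0) = 1) by (unfold lor; simpl; ring).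
  assert (hunit3 : lor (dcurve gamma s) (dcurve gamma s) = 1)
    by (rewrite hd1, lor_xz_embed; exact hunit).
  assert (horth : lor (dcurve gamma s) (V3 0 1 0) = 0)
    by (rewrite hd1; unfold lor; simpl; ring).
  split; [apply cylinder_spacelike; assumption |].
  split; [apply cylinder_lcross_unit_normal; assumption |].
  split; [unfold cylinder; simpl; lra |].
  rewrite mean_curv_cylinder by (try apply lcross_unit_normal; assumption).
  pose proof (lor2_normal_rotated _ _ hnn hno) as hrot.
  rewrite hd1, hd2, lor_e3, lcross_xz_embed_e2, lor_xz_embed, hk, lor2_e2.
  destruct (dcurve2 beta s) as [p q], (n s) as [n1 n2]; unfold cylinder, lor2 in *; simpl in *.
  rewrite Rmult_0_r, Rplus_0_r.
  transitivity (alpha * ((n1 * q - n2 * p) * n2) / snd (beta s)); [field | rewrite hrot; field]; lra.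
Qed.

Theorem proposition2p1 (alpha : R) (halpha : alpha <> 0) :
  (* direct statement *)
  (forall (a b : R) (gamma : R -> vec3) (v : vec3) (kappa : R -> R),
     a < b ->
     lor v v = 1 ->
     C2_curve3 gamma a b ->
     (forall s, a < s < b -> lor (dcurve gamma s) (dcurve gamma s) = 1) ->
     (exists c, forall s, a < s < b -> lor (gamma s) v = c) ->
     (forall s, a < s < b ->
        kappa s <> 0 /\
        dcurve (dcurve gamma) s = vscale (kappa s) (lcross (dcurve gamma s) v)) ->
     alpha_singular_maximal alpha (fun s _ => a < s < b)
       (fun s t => vadd (gamma s) (vscale t v))
       (fun s _ => lcross (dcurve gamma s) v) ->
     vz v = 0 /\
     (let w := V3 (- vy v) (vx v) 0 in
      let beta := fun s => (lor (gamma s) w, vz (gamma s)) in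
      let nb := fun s => (lor (lcross (dcurve gamma s) v) w,
                          vz (lcross (dcurve gamma s) v)) in
      forall s, a < s < b ->
        gamma s = vadd (vscale (lor (gamma s) v) v)
                   (vadd (vscale (fst (beta s)) w) (vscale (snd (beta s)) e3)) /\
        0 < snd (beta s) /\
        lor2 (dcurve2 beta s) (dcurve2 beta s) = 1 /\
        lor2 (nb s) (nb s) = -1 /\ lor2 (nb s) (dcurve2 beta s) = 0 /\
        dcurve2 (dcurve2 beta) s = (kappa s * fst (nb s), kappa s * snd (nb s)) /\
        kappa s = - alpha * lor2 (nb s) (0, 1) / snd (beta s))) /\
  (* converse *)
  (forall (a b : R) (beta : R -> R * R) (n : R -> R * R) (kappa : R -> R),
     a < b ->
     C2_curve2 beta a b ->
     (forall s, a < s < b ->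
        0 < snd (beta s) /\
        lor2 (dcurve2 beta s) (dcurve2 beta s) = 1 /\
        lor2 (n s) (n s) = -1 /\ lor2 (n s) (dcurve2 beta s) = 0 /\
        kappa s <> 0 /\
        dcurve2 (dcurve2 beta) s = (kappa s * fst (n s), kappa s * snd (n s)) /\
        kappa s = - alpha * lor2 (n s) (0, 1) / snd (beta s)) ->
     let gamma := fun s => V3 (fst (beta s)) 0 (snd (beta s)) in
     let v := V3 0 1 0 in
     alpha_singular_maximal alpha (fun s _ => a < s < b)
       (fun s t => vadd (gamma s) (vscale t v))
       (fun s _ => lcross (dcurve gamma s) v)).
Proof.
  split.
  - intros a b gamma v kappa hab hv hC2 hunit _ hk hsm.
    change (alpha_singular_maximal alpha (fun s _ => a < s < b) (cylinder gamma v)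
              (fun s _ => lcross (dcurve gamma s) v)) in hsm.
    assert (hvz : vz v = 0).
    { apply (cylinder_upper_halfspace_horizontal gamma v ((a + b) / 2)); intros t.
      apply (hsm ((a + b) / 2) t); lra. }
    split; [exact hvz | intros w beta nb s hs].
    split; [apply vec3_decomp; assumption |].
    destruct (hk s hs) as [_ hacc].
    exact (singular_maximal_cylinder_generatrix alpha a b gamma v kappa s
             hv hvz hC2 hs (hunit s hs) hacc hsm).
  - intros a b beta n kappa _ _ hyp.
    apply (generatrix_singular_maximal_cylinder alpha a b beta n kappa); intros s hs.
    destruct (hyp s hs) as [? [? [? [? [_ [? ?]]]]]]; repeat split; assumption.
Qed.
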